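(* Let $f:X\to Y$ be a local homeomorphism between metric spaces, where $X$ is complete and $Y$ is path-connected and locally $\mathcal R$-contractible. Suppose that (1) for every bounded subset $B$ of $X$, $\inf_{x\in B}D_x^-f>0$; and (2) for some $y_0\in Y$ and $x_0\in X$, $d(f(x),y_0)\to\infty$ as $d(x,x_0)\to\infty$. Then $f$ is a covering projection.
   Context: A path $p:[0,1]\to Y$ is rectifiable if its length $\sup\sum_i d(p(t_i),p(t_{i+1}))$ (over partitions of $[0,1]$) is finite. $Y$ is locally $\mathcal R$-contractible if every $y_0\in Y$ has an open neighborhood $U$ with a continuous homotopy $H:U\times[0,1]\to U$ such that $H(y_0,t)=y_0$ for all $t$, $H(y,0)=y_0$, $H(y,1)=y$ for all $y\in U$, and each path $t\mapsto H(y,t)$ is rectifiable. For non-isolated $x\in X$, $D_x^-f=\liminf_{z\to x,\,z\neq x}\frac{d(f(z),f(x))}{d(z,x)}$; $X$ is assumed to have no isolated points. *)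

From Stdlib Require Import Reals Lra.
From Coquelicot Require Import Rbar Lub.
Open Scope R_scope.

Record MetricSpace := MkMetricSpace {
  mcarrier :> Type;
  mdist : mcarrier -> mcarrier -> R;
  mdist_ge0 : forall x y, 0 <= mdist x y;
  mdist_eq0 : forall x y, mdist x y = 0 <-> x = y;
  mdist_sym : forall x y, mdist x y = mdist y x;
  mdist_tri : forall x y z, mdist x z <= mdist x y + mdist y z
}.
Arguments mdist {m} x y.

Definition m_open {X : MetricSpace} (U : X -> Prop) : Prop :=
  forall x, U x -> exists eps, 0 < eps /\ forall z, mdist x z < eps -> U z.

Definition m_continuous_on {X Y : MetricSpace} (A : X -> Prop) (f : X -> Y) : Prop :=
  forall x, A x -> forall eps, 0 < eps -> exists delta, 0 < delta /\
    forall z, A z -> mdist x z < delta -> mdist (f x) (f z) < eps.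

Definition m_continuous {X Y : MetricSpace} (f : X -> Y) : Prop := m_continuous_on (fun _ => True) f.

Definition homeo_onto {X Y : MetricSpace} (f : X -> Y) (U : X -> Prop) (V : Y -> Prop) : Prop :=
  exists g : Y -> X,
    (forall x, U x -> V (f x) /\ g (f x) = x) /\
    (forall y, V y -> U (g y) /\ f (g y) = y) /\
    m_continuous_on U f /\ m_continuous_on V g.

Definition local_homeomorphism {X Y : MetricSpace} (f : X -> Y) : Prop :=
  forall x, exists (U : X -> Prop) (V : Y -> Prop),
    U x /\ m_open U /\ m_open V /\ homeo_onto f U V.

(* covering projection (Spanier): continuous, surjective, and every point of Y
   has an open neighbourhood V evenly covered by f *)
Definition covering_projection {X Y : MetricSpace} (f : X -> Y) : Prop :=
  m_continuous f /\ (forall y, exists x, f x = y) /\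
  forall y, exists (V : Y -> Prop), V y /\ m_open V /\
    exists (I : Type) (W : I -> X -> Prop),
      (forall i, m_open (W i)) /\
      (forall i j x, W i x -> W j x -> i = j) /\
      (forall x, V (f x) <-> exists i, W i x) /\
      (forall i, homeo_onto f (W i) V).

Definition m_complete (X : MetricSpace) : Prop :=
  forall u : nat -> X,
    (forall eps, 0 < eps -> exists N, forall m n, (N <= m)%nat -> (N <= n)%nat ->
        mdist (u m) (u n) < eps) ->
    exists l, forall eps, 0 < eps -> exists N, forall n, (N <= n)%nat -> mdist (u n) l < eps.

Definition no_isolated_points (X : MetricSpace) : Prop :=
  forall (x : X) eps, 0 < eps -> exists z, z <> x /\ mdist z x < eps.

Definition m_bounded {X : MetricSpace} (B : X -> Prop) : Prop :=
  exists M, forall a b, B a -> B b -> mdist a b <= M.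

(* lower Dini-type derivative
   D_x^- f = liminf_{z -> x, z <> x} d(f z, f x) / d(z, x)
           = sup_{delta > 0} inf_{0 < d(z,x) < delta} d(f z, f x) / d(z, x) *)
Definition lower_deriv {X Y : MetricSpace} (f : X -> Y) (x : X) : Rbar :=
  Rbar_lub (fun v => exists delta, 0 < delta /\
    v = Rbar_glb (fun w => exists z, z <> x /\ mdist z x < delta /\
                     w = Finite (mdist (f z) (f x) / mdist z x))).


Section PathDefs.
Variable Y : MetricSpace.

Definition unit_I (t : R) : Prop := 0 <= t <= 1.

Definition R_metric : MetricSpace.
Proof.
  refine (MkMetricSpace R (fun a b => Rabs (a - b)) _ _ _ _).
  - intros; apply Rabs_pos.
  - intros x y; split; intro H.
    + destruct (Req_dec (x - y) 0) as [E|E]; [lra|].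
      exfalso; apply (Rabs_no_R0 _ E); exact H.
    + subst; rewrite Rminus_diag; apply Rabs_R0.
  - intros; apply Rabs_minus_sym.
  - intros x y z; replace (x - z) with ((x - y) + (y - z)) by ring; apply Rabs_triang.
Defined.

(* a path: a map [0,1] -> Y (represented on R), continuous on [0,1] *)
Definition is_path (p : R -> Y) : Prop := m_continuous_on (X:=R_metric) unit_I p.

Definition path_connected : Prop :=
  forall y1 y2 : Y, exists p : R -> Y, is_path p /\ p 0 = y1 /\ p 1 = y2.

Fixpoint poly_sum (p : R -> Y) (t : nat -> R) (n : nat) : R :=
  match n with
  | O => 0
  | S k => poly_sum p t k + mdist (p (t k)) (p (t (S k)))
  end.

Definition rectifiable (p : R -> Y) : Prop :=
  exists M, forall (n : nat) (t : nat -> R),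
    t O = 0 -> t n = 1 -> (forall i, (i < n)%nat -> t i <= t (S i)) ->
    poly_sum p t n <= M.

Definition locally_R_contractible : Prop :=
  forall y0 : Y, exists (U : Y -> Prop) (H : Y -> R -> Y),
    U y0 /\ m_open U /\
    (forall y t, U y -> unit_I t -> U (H y t)) /\
    (forall y t, U y -> unit_I t -> forall eps, 0 < eps -> exists delta, 0 < delta /\
       forall y' t', U y' -> unit_I t' -> mdist y y' < delta -> Rabs (t - t') < delta ->
         mdist (H y t) (H y' t') < eps) /\
    (forall t, unit_I t -> H y0 t = y0) /\
    (forall y, U y -> H y 0 = y0 /\ H y 1 = y) /\
    (forall y, U y -> rectifiable (H y)).

End PathDefs.

(* A rectifiable path [g] in [Y] lifts through [f]. Its preimage is bounded by the
   properness hypothesis, so the lower derivative of [f] exceeds some [c > 0] along any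
   partial lift [a]; hence [c d(a s, a t)] is at most the length of [g] on [[s, t]], the
   partial lift is Cauchy at the right end of its interval and, [X] being complete,
   extends over it, after which the local homeomorphism continues it further.
   Local R-contractibility gives each [y] a neighbourhood [U] contracted onto [y] along
   rectifiable paths [H w]; lifting them from the points of the fibre over [y] yields
   sheets over [U], continuous in [w] by uniqueness of lifts, and the same lifting along
   a path from [f x0] shows that [f] is onto. *)

From Stdlib Require Import Reals Lra Lia Classical ClassicalEpsilon ProofIrrelevance.
From Coquelicot Require Import Rbar Lub.
Open Scope R_scope.

Lemma real_induction (p q : R) (P : R -> Prop) : p <= q ->
  (forall s, p <= s <= q -> (forall u, p <= u < s -> P u) ->
     exists eta, 0 < eta /\ forall u, p <= u <= q -> u < s + eta -> P u) ->
  forall u, p <= u <= q -> P u.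
Proof.
  intros Hpq Hstep.
  set (E := fun s => p <= s <= q /\ forall u, p <= u <= s -> P u).
  assert (Ep : E p).
  { destruct (Hstep p) as [eta [Heta HP]]; [lra | intros; lra |].
    split; [lra|]. intros u Hu. apply HP; lra. }
  assert (Hbound : bound E) by (exists q; intros s [Hs _]; lra).
  destruct (completeness E Hbound (ex_intro _ p Ep)) as [m [Hub Hlub]].
  assert (Hpm : p <= m) by (apply Hub; exact Ep).
  assert (Hmq : m <= q) by (apply Hlub; intros s [Hs _]; lra).
  assert (Hbelow : forall u, p <= u < m -> P u).
  { intros u Hu. apply NNPP; intro HnP.
    assert (m <= u); [|lra].
    apply Hlub. intros s [Hs HsP]. destruct (Rle_lt_dec s u) as [|Hsu]; [lra|].
    exfalso; apply HnP, HsP; lra. }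
  destruct (Hstep m (conj Hpm Hmq) Hbelow) as [eta [Heta HP]].
  destruct (Req_dec m q) as [->|Hmq'].
  - intros u Hu. apply HP; lra.
  - (* otherwise [min (m + eta/2) q] would be a larger element of [E] *)
    exfalso.
    set (m' := Rmin (m + eta / 2) q).
    assert (Hm'1 : m' <= m + eta / 2) by apply Rmin_l.
    assert (Hm'2 : m' <= q) by apply Rmin_r.
    assert (Hm'3 : m < m') by (unfold m'; apply Rmin_case; lra).
    assert (E m') by (split; [lra|]; intros u Hu; apply HP; lra).
    assert (m' <= m) by (apply Hub; auto). lra.
Qed.

Lemma left_point (p s eta : R) : p <= s -> 0 < eta ->
  exists u, p <= u <= s /\ s - eta < u /\ (u < s \/ u = p /\ s = p).
Proof.
  intros Hps Heta. destruct (Req_dec s p) as [->|Hsp].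
  - exists p. split; [lra|]. split; [lra|]. now right.
  - exists (Rmax p (s - eta / 2)). unfold Rmax.
    destruct (Rle_dec p (s - eta / 2)); split; try split; lra.
Qed.

Lemma mdist_xx (X : MetricSpace) (x : X) : mdist x x = 0.
Proof. now apply mdist_eq0. Qed.

Lemma eq_of_mdist_lt (X : MetricSpace) (a b : X) :
  (forall eps, 0 < eps -> mdist a b < eps) -> a = b.
Proof.
  intros H. apply mdist_eq0. destruct (mdist_ge0 _ a b) as [Hpos|]; auto.
  specialize (H _ Hpos). lra.
Qed.

Lemma m_continuous_on_sub (X Y : MetricSpace) (A B : X -> Prop) (g : X -> Y) :
  (forall x, A x -> B x) -> m_continuous_on B g -> m_continuous_on A g.
Proof.
  intros HAB Hg x Ax eps Heps. destruct (Hg x (HAB x Ax) eps Heps) as [d [Hd Hz]].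
  exists d; split; auto.
Qed.

Lemma m_continuous_on_comp (Z X Y : MetricSpace) (A : Z -> Prop) (h : Z -> Y)
    (V : Y -> Prop) (g : Y -> X) :
  m_continuous_on A h -> (forall t, A t -> V (h t)) -> m_continuous_on V g ->
  m_continuous_on A (fun t => g (h t)).
Proof.
  intros Hh HV Hg t At eps Heps.
  destruct (Hg (h t) (HV t At) eps Heps) as [d1 [Hd1 H1]].
  destruct (Hh t At d1 Hd1) as [d2 [Hd2 H2]].
  exists d2. split; auto.
Qed.

Definition rcont {Y : MetricSpace} (A : R -> Prop) (a : R -> Y) :=
  m_continuous_on (X := R_metric) A a.

Lemma rcont_at {Y : MetricSpace} (A : R -> Prop) (a : R -> Y) : rcont A a ->
  forall s, A s -> forall eps, 0 < eps -> exists d, 0 < d /\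
    forall u, A u -> Rabs (s - u) < d -> mdist (a s) (a u) < eps.
Proof. intros H s As eps Heps. exact (H s As eps Heps). Qed.

Lemma rcont_intro {Y : MetricSpace} (A : R -> Prop) (a : R -> Y) :
  (forall s, A s -> forall eps, 0 < eps -> exists d, 0 < d /\
    forall u, A u -> Rabs (s - u) < d -> mdist (a s) (a u) < eps) -> rcont A a.
Proof. intros H s As eps Heps. exact (H s As eps Heps). Qed.

Lemma rcont_sub {Y : MetricSpace} (A B : R -> Prop) (a : R -> Y) :
  (forall t, A t -> B t) -> rcont B a -> rcont A a.
Proof. apply (m_continuous_on_sub R_metric). Qed.

Lemma rcont_glue {Y : MetricSpace} (p s q : R) (a c : R -> Y) :
  rcont (fun t => p <= t <= s) a -> rcont (fun t => s <= t <= q) c -> a s = c s ->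
  rcont (fun t => p <= t <= q) (fun t => if Rle_dec t s then a t else c t).
Proof.
  intros Ha Hc Hs. apply rcont_intro. intros t Ht eps Heps.
  destruct (Rle_dec t s) as [Hts|Hts].
  - destruct (rcont_at _ _ Ha t ltac:(lra) eps Heps) as [d1 [Hd1 D1]].
    destruct (Rlt_dec t s) as [Hlt|Hge].
    + exists (Rmin d1 (s - t)). split; [apply Rmin_case; lra|].
      intros u Hu Htu. pose proof (Rmin_l d1 (s - t)). pose proof (Rmin_r d1 (s - t)).
      apply Rabs_def2 in Htu. destruct (Rle_dec u s); [|lra].
      apply D1; [lra|]. apply Rabs_def1; lra.
    + assert (t = s) by lra. subst t.
      destruct (rcont_at _ _ Hc s ltac:(lra) eps Heps) as [d2 [Hd2 D2]].
      exists (Rmin d1 d2). split; [apply Rmin_case; lra|].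
      intros u Hu Htu. pose proof (Rmin_l d1 d2). pose proof (Rmin_r d1 d2).
      apply Rabs_def2 in Htu. destruct (Rle_dec u s).
      * apply D1; [lra|]. apply Rabs_def1; lra.
      * rewrite Hs. apply D2; [lra|]. apply Rabs_def1; lra.
  - destruct (rcont_at _ _ Hc t ltac:(lra) eps Heps) as [d2 [Hd2 D2]].
    exists (Rmin d2 (t - s)). split; [apply Rmin_case; lra|].
    intros u Hu Htu. pose proof (Rmin_l d2 (t - s)). pose proof (Rmin_r d2 (t - s)).
    apply Rabs_def2 in Htu. destruct (Rle_dec u s); [lra|].
    apply D2; [lra|]. apply Rabs_def1; lra.
Qed.

Lemma rcont_reverse {Y : MetricSpace} (p : R -> Y) :
  rcont unit_I p -> rcont unit_I (fun t => p (1 - t)).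
Proof.
  intros Hp. apply rcont_intro. intros t Ht eps Heps. unfold unit_I in *.
  destruct (rcont_at _ _ Hp (1 - t) ltac:(unfold unit_I; lra) eps Heps) as [d [Hd Hc]].
  exists d. split; auto. intros u Hu Htu. apply Hc; [unfold unit_I; lra|].
  replace (1 - t - (1 - u)) with (- (t - u)) by ring. now rewrite Rabs_Ropp.
Qed.

Lemma path_bounded (Y : MetricSpace) (p : R -> Y) (y : Y) : rcont unit_I p ->
  exists M, forall u, 0 <= u <= 1 -> mdist (p u) y <= M.
Proof.
  intros Hp.
  assert (H : forall u, 0 <= u <= 1 ->
    exists M, forall v, 0 <= v <= u -> mdist (p v) y <= M).
  2:{ destruct (H 1) as [M HM]; [lra|]. exists M; auto. }
  apply (real_induction 0 1); [lra|]. intros s Hs Hbelow.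
  destruct (rcont_at _ _ Hp s Hs 1) as [d [Hd Hc]]; [lra|].
  destruct (left_point 0 s d) as [u0 [Hu0 [Hu0d Hu0s]]]; [lra | lra |].
  assert (H0 : exists M, forall v, 0 <= v <= u0 -> mdist (p v) y <= M).
  { destruct Hu0s as [Hlt| [-> _]]; [apply Hbelow; lra|].
    exists (mdist (p 0) y). intros v Hv. replace v with 0 by lra. lra. }
  destruct H0 as [M1 HM1].
  assert (HM1pos : 0 <= M1) by (pose proof (HM1 0 ltac:(lra)); pose proof (mdist_ge0 _ (p 0) y); lra).
  exists d. split; auto. intros u Hu Hus.
  exists (M1 + mdist (p s) y + 1). intros v Hv.
  pose proof (mdist_ge0 _ (p s) y).
  destruct (Rle_dec v u0) as [Hvu|Hvu].
  - specialize (HM1 v ltac:(lra)). lra.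
  - assert (Hsv : Rabs (s - v) < d) by (apply Rabs_def1; lra).
    specialize (Hc v ltac:(unfold unit_I; lra) Hsv).
    pose proof (mdist_tri _ (p v) (p s) y). rewrite mdist_sym in Hc. lra.
Qed.

Lemma rbar_lub_spec (E : Rbar -> Prop) : Rbar_is_lub E (Rbar_lub E).
Proof. unfold Rbar_lub. now destruct (Rbar_ex_lub E). Qed.

Lemma rbar_glb_spec (E : Rbar -> Prop) : Rbar_is_glb E (Rbar_glb E).
Proof. unfold Rbar_glb. now destruct (Rbar_ex_glb E). Qed.

Lemma lower_deriv_gt (X Y : MetricSpace) (f : X -> Y) (x : X) (c : R) :
  Rbar_lt (Finite c) (lower_deriv f x) ->
  exists d, 0 < d /\ forall z, mdist z x < d -> c * mdist z x <= mdist (f z) (f x).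
Proof.
  intros Hc. unfold lower_deriv in Hc.
  set (Q := fun delta => Rbar_glb (fun w => exists z, z <> x /\ mdist z x < delta /\
                     w = Finite (mdist (f z) (f x) / mdist z x))) in Hc.
  destruct (rbar_lub_spec (fun v => exists delta, 0 < delta /\ v = Q delta)) as [_ Hleast].
  assert (Hex : exists d, 0 < d /\ Rbar_lt (Finite c) (Q d)).
  { apply NNPP; intro Hn.
    assert (Hupper : Rbar_is_upper_bound (fun v => exists delta, 0 < delta /\ v = Q delta) c).
    { intros v [d [Hd ->]]. apply Rbar_not_lt_le. intro Hlt. apply Hn. now exists d. }
    exact (Rbar_le_not_lt _ _ (Hleast (Finite c) Hupper) Hc). }
  destruct Hex as [d [Hd HQ]]. exists d. split; auto.
  intros z Hz. destruct (classic (z = x)) as [->|Hzx].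
  - rewrite mdist_xx, Rmult_0_r. apply mdist_ge0.
  - destruct (rbar_glb_spec (fun w => exists z, z <> x /\ mdist z x < d /\
                     w = Finite (mdist (f z) (f x) / mdist z x))) as [Hlow _].
    specialize (Hlow _ (ex_intro _ z (conj Hzx (conj Hz eq_refl)))).
    fold (Q d) in Hlow.
    assert (Hpos : 0 < mdist z x).
    { destruct (mdist_ge0 _ z x) as [|He]; auto.
      exfalso. apply Hzx. now apply mdist_eq0. }
    assert (Hr : c < mdist (f z) (f x) / mdist z x).
    { destruct (Q d); simpl in *; try contradiction; lra. }
    apply Rlt_le. apply (Rmult_lt_compat_r (mdist z x)) in Hr; auto.
    unfold Rdiv in Hr. rewrite Rmult_assoc, Rinv_l in Hr; lra.
Qed.

Lemma glb_lower_deriv_pos (X Y : MetricSpace) (f : X -> Y) (B : X -> Prop) :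
  Rbar_lt (Finite 0) (Rbar_glb (fun v => exists x, B x /\ v = lower_deriv f x)) ->
  exists c, 0 < c /\ forall x, B x -> Rbar_lt (Finite c) (lower_deriv f x).
Proof.
  intros H.
  destruct (rbar_glb_spec (fun v => exists x, B x /\ v = lower_deriv f x)) as [Hlow _].
  set (G := Rbar_glb _) in *.
  assert (Hc : exists c, 0 < c /\ Rbar_lt (Finite c) G).
  { destruct G as [g| |]; simpl in H.
    - exists (g / 2). simpl. split; lra.
    - exists 1. simpl. split; auto; lra.
    - contradiction. }
  destruct Hc as [c [Hc HcG]]. exists c. split; auto.
  intros x Bx. eapply Rbar_lt_le_trans; [exact HcG|].
  apply Hlow. now exists x.
Qed.

Section PolygonalSums.

Variables (Y : MetricSpace) (p : R -> Y).

Lemma poly_sum_ext t t' n :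
  (forall i, (i <= n)%nat -> t i = t' i) -> poly_sum Y p t n = poly_sum Y p t' n.
Proof.
  induction n; intros H; simpl; auto.
  rewrite IHn by (intros; apply H; lia). rewrite (H n), (H (S n)) by lia. reflexivity.
Qed.

Lemma poly_sum_snoc t n s :
  poly_sum Y p (fun i => if Nat.leb i n then t i else s) (S n)
  = poly_sum Y p t n + mdist (p (t n)) (p s).
Proof.
  cbn [poly_sum]. rewrite Nat.leb_refl.
  replace (Nat.leb (S n) n) with false by (symmetry; apply Nat.leb_gt; lia).
  f_equal. apply poly_sum_ext. intros i Hi.
  now replace (Nat.leb i n) with true by (symmetry; apply Nat.leb_le; auto).
Qed.

Lemma poly_sum_shift t n :
  poly_sum Y p t (S n) = mdist (p (t O)) (p (t 1%nat)) + poly_sum Y p (fun i => t (S i)) n.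
Proof. induction n; simpl; [ring|]. simpl in IHn. rewrite IHn. ring. Qed.

Lemma poly_sum_rev n : forall t,
  poly_sum Y p (fun i => t (n - i)%nat) n = poly_sum Y p t n.
Proof.
  induction n; intros t; [reflexivity|].
  rewrite poly_sum_shift. cbn [poly_sum].
  rewrite (poly_sum_ext (fun i => t (S n - S i)%nat) (fun i => t (n - i)%nat))
    by (intros; reflexivity).
  rewrite IHn. replace (S n - 0)%nat with (S n) by lia. replace (S n - 1)%nat with n by lia.
  rewrite mdist_sym. ring.
Qed.

End PolygonalSums.

Lemma poly_sum_comp (Y : MetricSpace) (p : R -> Y) h t n :
  poly_sum Y (fun x => p (h x)) t n = poly_sum Y p (fun i => h (t i)) n.
Proof. induction n; simpl; auto. now rewrite IHn. Qed.

Lemma rectifiable_reverse (Y : MetricSpace) (p : R -> Y) :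
  rectifiable Y p -> rectifiable Y (fun t => p (1 - t)).
Proof.
  intros [M HM]. exists M. intros n t H0 Hn Hmono.
  rewrite poly_sum_comp, <- poly_sum_rev. apply HM.
  - simpl. replace (n - 0)%nat with n by lia. lra.
  - rewrite Nat.sub_diag. lra.
  - intros i Hi. replace (n - i)%nat with (S (n - S i)) by lia.
    specialize (Hmono (n - S i)%nat ltac:(lia)). lra.
Qed.

Section PartialLength.

Variables (Y : MetricSpace) (p : R -> Y).

Definition partition_sums (s : R) : R -> Prop :=
  fun v => exists n t, t O = 0 /\ t n = s /\ (forall i, (i < n)%nat -> t i <= t (S i)) /\
     v = poly_sum Y p t n.

Definition partial_length (s : R) : R := real (Lub_Rbar (partition_sums s)).

Lemma partition_sums_snoc s s' v : s <= s' -> partition_sums s v ->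
  partition_sums s' (v + mdist (p s) (p s')).
Proof.
  intros Hs [n [t [H0 [Hn [Hmono ->]]]]].
  assert (Hlast : Nat.leb (S n) n = false) by (apply Nat.leb_gt; lia).
  exists (S n), (fun i => if Nat.leb i n then t i else s').
  split; [|split; [|split]].
  - auto.
  - now rewrite Hlast.
  - intros i Hi. destruct (Nat.eq_dec i n) as [->|Hin].
    + rewrite Nat.leb_refl, Hlast. lra.
    + replace (Nat.leb i n) with true by (symmetry; apply Nat.leb_le; lia).
      replace (Nat.leb (S i) n) with true by (symmetry; apply Nat.leb_le; lia).
      apply Hmono. lia.
  - now rewrite poly_sum_snoc, Hn.
Qed.

Lemma partial_length_spec (M : R) s :
  (forall (n : nat) (t : nat -> R), t O = 0 -> t n = 1 ->
     (forall i, (i < n)%nat -> t i <= t (S i)) -> poly_sum Y p t n <= M) ->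
  0 <= s <= 1 ->
  (forall v, partition_sums s v -> v <= partial_length s) /\
  (forall b, (forall v, partition_sums s v -> v <= b) -> partial_length s <= b) /\
  partial_length s <= M.
Proof.
  intros HM Hs.
  assert (Hbound : forall v, partition_sums s v -> v <= M).
  { intros v Hv.
    destruct (partition_sums_snoc s 1 v ltac:(lra) Hv) as [n [t [H0 [Hn [Hmono Hv']]]]].
    pose proof (HM n t H0 Hn Hmono). pose proof (mdist_ge0 _ (p s) (p 1)). lra. }
  assert (Hne : partition_sums s (poly_sum Y p (fun i => match i with O => 0 | _ => s end) 1)).
  { exists 1%nat, (fun i => match i with O => 0 | _ => s end). repeat split; auto.
    intros i Hi. replace i with O by lia. lra. }
  destruct (Lub_Rbar_correct (partition_sums s)) as [Hub Hleast].
  unfold partial_length. destruct (Lub_Rbar (partition_sums s)) as [l| |].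
  - simpl. split; [|split].
    + exact Hub.
    + intros b Hb. exact (Hleast (Finite b) Hb).
    + exact (Hleast (Finite M) Hbound).
  - exfalso. exact (Hleast (Finite M) Hbound).
  - exfalso. exact (Hub _ Hne).
Qed.

Lemma partial_length_add : rectifiable Y p ->
  forall s t, 0 <= s <= t -> t <= 1 ->
  partial_length s + mdist (p s) (p t) <= partial_length t.
Proof.
  intros [M HM] s t Hst Ht.
  destruct (partial_length_spec M s HM ltac:(lra)) as [_ [Hs _]].
  destruct (partial_length_spec M t HM ltac:(lra)) as [Ht' _].
  assert (partial_length s <= partial_length t - mdist (p s) (p t)); [|lra].
  apply Hs. intros v Hv. pose proof (Ht' _ (partition_sums_snoc s t v ltac:(lra) Hv)). lra.
Qed.

Lemma partial_length_bounded : rectifiable Y p ->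
  exists M, forall s, 0 <= s <= 1 -> partial_length s <= M.
Proof.
  intros [M HM]. exists M. intros s Hs. apply (partial_length_spec M s HM Hs).
Qed.

End PartialLength.

Definition cauchy_at_left {X : MetricSpace} (a : R -> X) (sig : R) : Prop :=
  forall eps, 0 < eps -> exists ts, 0 <= ts < sig /\
    forall t t', ts <= t < sig -> ts <= t' < sig -> mdist (a t) (a t') < eps.

Definition converges_at_left {X : MetricSpace} (a : R -> X) (sig : R) (xs : X) : Prop :=
  forall eps, 0 < eps -> exists eta, 0 < eta /\
    forall t, 0 <= t < sig -> sig - eta < t -> mdist (a t) xs < eps.

Lemma length_control_cauchy (X : MetricSpace) (a : R -> X) (l : R -> R) (c sig M : R) :
  0 < c -> 0 < sig ->
  (forall s t, 0 <= s <= t -> t < sig -> c * mdist (a s) (a t) <= l t - l s) ->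
  (forall t, 0 <= t < sig -> l t <= M) ->
  cauchy_at_left a sig.
Proof.
  intros Hc Hsig Hctrl HM eps Heps.
  assert (Hmono : forall s t, 0 <= s <= t -> t < sig -> l s <= l t).
  { intros s t Hst Hts. pose proof (Hctrl s t Hst Hts).
    pose proof (mdist_ge0 _ (a s) (a t)). nra. }
  set (E := fun v => exists t, 0 <= t < sig /\ v = l t).
  assert (HEb : bound E) by (exists M; intros v [t [Ht ->]]; apply HM; lra).
  assert (HE0 : E (l 0)) by (exists 0; split; [lra | reflexivity]).
  destruct (completeness E HEb (ex_intro _ (l 0) HE0)) as [Lam [Hub Hleast]].
  assert (Hex : exists ts, 0 <= ts < sig /\ Lam - c * eps < l ts).
  { apply NNPP; intro Hn.
    assert (Lam <= Lam - c * eps); [|nra].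
    apply Hleast. intros v [t [Ht ->]]. apply Rnot_lt_le. intro Hlt. apply Hn. now exists t. }
  destruct Hex as [ts [Hts Hlts]]. exists ts. split; auto.
  assert (Hordered : forall t t', ts <= t <= t' -> t' < sig -> mdist (a t) (a t') < eps).
  { intros t t' H1 H2. pose proof (Hctrl t t' ltac:(lra) H2).
    assert (l t' <= Lam) by (apply Hub; exists t'; split; [lra | reflexivity]).
    pose proof (Hmono ts t ltac:(lra) ltac:(lra)).
    apply (Rmult_lt_reg_l c); auto. lra. }
  intros t t' H1 H2. destruct (Rle_dec t t').
  - apply Hordered; lra.
  - rewrite mdist_sym. apply Hordered; lra.
Qed.

Lemma seq_to_left_bounds (sig : R) n : 0 < sig -> 0 <= sig - sig / (INR n + 2) < sig.
Proof.
  intros Hsig. pose proof (pos_INR n).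
  assert (0 < sig / (INR n + 2)) by (apply Rdiv_lt_0_compat; lra).
  assert (sig / (INR n + 2) <= sig); [|lra].
  apply (Rmult_le_reg_r (INR n + 2)); [lra|].
  unfold Rdiv. rewrite Rmult_assoc, Rinv_l by lra. nra.
Qed.

Lemma seq_to_left_eventually (sig ts : R) : 0 < sig -> ts < sig ->
  exists N, forall n, (N <= n)%nat -> ts <= sig - sig / (INR n + 2).
Proof.
  intros Hsig Hts. destruct (INR_archimed (sig - ts) sig) as [N HN]; [lra|].
  exists N. intros n Hn. apply le_INR in Hn. pose proof (pos_INR n).
  assert (sig / (INR n + 2) <= sig - ts); [|lra].
  apply (Rmult_le_reg_r (INR n + 2)); [lra|].
  unfold Rdiv. rewrite Rmult_assoc, Rinv_l by lra. nra.
Qed.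

Lemma cauchy_at_left_converges (X : MetricSpace) (a : R -> X) (sig : R) :
  m_complete X -> 0 < sig -> cauchy_at_left a sig ->
  exists xs, converges_at_left a sig xs.
Proof.
  intros Hcomp Hsig Hcauchy.
  set (tau := fun n : nat => sig - sig / (INR n + 2)).
  destruct (Hcomp (fun n => a (tau n))) as [xs Hxs].
  { intros eps Heps. destruct (Hcauchy eps Heps) as [ts [Hts Hc]].
    destruct (seq_to_left_eventually sig ts Hsig ltac:(lra)) as [N HN].
    exists N. intros m n Hm Hn. apply Hc.
    - pose proof (HN m Hm). pose proof (seq_to_left_bounds sig m Hsig). unfold tau; lra.
    - pose proof (HN n Hn). pose proof (seq_to_left_bounds sig n Hsig). unfold tau; lra. }
  exists xs. intros eps Heps.
  destruct (Hcauchy (eps / 2)) as [ts [Hts Hc]]; [lra|].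
  destruct (seq_to_left_eventually sig ts Hsig ltac:(lra)) as [N1 HN1].
  destruct (Hxs (eps / 2)) as [N2 HN2]; [lra|].
  exists (sig - ts). split; [lra|]. intros t Ht Ht'.
  set (n := Nat.max N1 N2).
  specialize (HN1 n (Nat.le_max_l _ _)). specialize (HN2 n (Nat.le_max_r _ _)).
  pose proof (seq_to_left_bounds sig n Hsig).
  pose proof (Hc t (tau n) ltac:(lra) ltac:(unfold tau; lra)).
  pose proof (mdist_tri _ (a t) (a (tau n)) xs). cbv beta in HN2. lra.
Qed.

Lemma lift_dist_le_length (X Y : MetricSpace) (f : X -> Y) (a : R -> X) (g : R -> Y)
    (l : R -> R) (c s0 q : R) :
  0 < c -> s0 <= q -> rcont (fun t => s0 <= t <= q) a ->
  (forall u, s0 <= u <= q -> f (a u) = g u) ->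
  (forall u, s0 <= u <= q -> exists d, 0 < d /\ forall z, mdist z (a u) < d ->
      c * mdist z (a u) <= mdist (f z) (f (a u))) ->
  (forall s t, s0 <= s <= t -> t <= q -> l s + mdist (g s) (g t) <= l t) ->
  forall u, s0 <= u <= q -> c * mdist (a s0) (a u) <= l u - l s0.
Proof.
  intros Hc Hsq Ha Hfa Hderiv Hl.
  apply (real_induction s0 q); auto.
  intros tau Htau Hbelow.
  destruct (Hderiv tau Htau) as [d [Hd Hz]].
  destruct (rcont_at _ _ Ha tau Htau d Hd) as [e [He Hce]].
  destruct (left_point s0 tau e) as [u0 [Hu0 [Hu0e Hu0s]]]; [lra | lra |].
  assert (H0 : c * mdist (a s0) (a u0) <= l u0 - l s0).
  { destruct Hu0s as [Hlt| [-> _]]; [apply Hbelow; lra|]. rewrite mdist_xx. lra. }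
  assert (Hnear : forall u, s0 <= u <= q -> Rabs (tau - u) < e ->
    c * mdist (a u) (a tau) <= mdist (g u) (g tau)).
  { intros u Hu Hue. rewrite <- !Hfa by lra. apply Hz.
    rewrite mdist_sym. now apply Hce. }
  exists e. split; auto. intros u Hu Hue.
  destruct (Rlt_dec u tau) as [Hut|Hut]; [apply Hbelow; lra|].
  pose proof (Hnear u0 ltac:(lra) ltac:(apply Rabs_def1; lra)).
  pose proof (Hnear u Hu ltac:(apply Rabs_def1; lra)).
  pose proof (Hl u0 tau ltac:(lra) ltac:(lra)).
  pose proof (Hl tau u ltac:(lra) ltac:(lra)).
  pose proof (mdist_tri _ (a s0) (a u0) (a u)).
  pose proof (mdist_tri _ (a u0) (a tau) (a u)).
  rewrite (mdist_sym _ (a tau) (a u)) in *. rewrite (mdist_sym _ (g tau) (g u)) in *.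
  nra.
Qed.

Definition lift_from {X Y : MetricSpace} (f : X -> Y) (g : R -> Y) (x : X) (u : R)
    (b : R -> X) : Prop :=
  rcont (fun t => 0 <= t <= u) b /\ b 0 = x /\ forall t, 0 <= t <= u -> f (b t) = g t.

Lemma lift_reverse {X Y : MetricSpace} (f : X -> Y) g x a : lift_from f g x 1 a ->
  lift_from f (fun t => g (1 - t)) (a 1) 1 (fun t => a (1 - t)).
Proof.
  intros [Hc [H0 Hf]]. split; [|split].
  - exact (rcont_reverse a Hc).
  - simpl. now replace (1 - 0) with 1 by ring.
  - intros t Ht. apply Hf. lra.
Qed.

Section LocalHomeomorphism.

Variables (X Y : MetricSpace) (f : X -> Y).
Hypothesis Hlh : local_homeomorphism f.

Lemma local_homeomorphism_continuous : m_continuous f.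
Proof.
  intros x _ eps Heps.
  destruct (Hlh x) as [U [V [Ux [HU [_ [g [_ [_ [Hf _]]]]]]]]].
  destruct (HU x Ux) as [r [Hr Hball]].
  destruct (Hf x Ux eps Heps) as [d [Hd Hz]].
  exists (Rmin d r). split; [apply Rmin_case; lra|].
  intros z _ Hxz. pose proof (Rmin_l d r). pose proof (Rmin_r d r).
  apply Hz; [apply Hball|]; lra.
Qed.

Lemma lift_unique p q (a b : R -> X) : p <= q ->
  rcont (fun t => p <= t <= q) a -> rcont (fun t => p <= t <= q) b ->
  (forall u, p <= u <= q -> f (a u) = f (b u)) -> a p = b p ->
  forall u, p <= u <= q -> a u = b u.
Proof.
  intros Hpq Ha Hb Hf H0.
  apply (real_induction p q (fun u => a u = b u) Hpq).
  intros s Hs Hbelow.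
  assert (Hss : a s = b s).
  { destruct (Req_dec s p) as [->|Hsp]; auto.
    apply eq_of_mdist_lt. intros eps Heps.
    destruct (rcont_at _ _ Ha s Hs (eps / 2)) as [d1 [Hd1 D1]]; [lra|].
    destruct (rcont_at _ _ Hb s Hs (eps / 2)) as [d2 [Hd2 D2]]; [lra|].
    destruct (left_point p s (Rmin d1 d2)) as [u [Hu [Hud Hus]]];
      [lra | apply Rmin_case; lra |].
    destruct Hus as [Hus| [_ Esp]]; [|lra].
    pose proof (Rmin_l d1 d2). pose proof (Rmin_r d1 d2).
    specialize (D1 u ltac:(lra) ltac:(apply Rabs_def1; lra)).
    specialize (D2 u ltac:(lra) ltac:(apply Rabs_def1; lra)).
    rewrite (Hbelow u ltac:(lra)) in D1.
    pose proof (mdist_tri _ (a s) (b u) (b s)). rewrite (mdist_sym _ (b u) (b s)) in *. lra. }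
  (* [f] is injective on a neighbourhood of [a s = b s] *)
  destruct (Hlh (a s)) as [U [V [Us [HU [_ [h [Hh _]]]]]]].
  destruct (HU _ Us) as [r [Hr Hball]].
  destruct (rcont_at _ _ Ha s Hs r Hr) as [e1 [He1 E1]].
  destruct (rcont_at _ _ Hb s Hs r Hr) as [e2 [He2 E2]].
  exists (Rmin e1 e2). split; [apply Rmin_case; lra|].
  intros u Hu Hu2.
  destruct (Rlt_dec u s) as [Hus|Hus]; [apply Hbelow; lra|].
  pose proof (Rmin_l e1 e2). pose proof (Rmin_r e1 e2).
  assert (Ua : U (a u)) by (apply Hball, E1; [lra | apply Rabs_def1; lra]).
  assert (Ub : U (b u)) by (apply Hball; rewrite Hss; apply E2; [lra | apply Rabs_def1; lra]).
  rewrite <- (proj2 (Hh _ Ua)), <- (proj2 (Hh _ Ub)), Hf; auto.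
Qed.

Lemma lift_eq_local_inverse (U : X -> Prop) (V : Y -> Prop) (h : Y -> X) p q
    (b : R -> X) (k : R -> Y) :
  (forall z, U z -> V (f z) /\ h (f z) = z) -> (forall y, V y -> f (h y) = y) ->
  m_continuous_on V h -> p <= q ->
  rcont (fun t => p <= t <= q) b -> rcont (fun t => p <= t <= q) k ->
  (forall t, p <= t <= q -> V (k t) /\ f (b t) = k t) -> U (b p) ->
  forall t, p <= t <= q -> b t = h (k t).
Proof.
  intros H1 H2 Hh Hpq Hb Hk Hbk Up.
  apply lift_unique; auto.
  - apply (m_continuous_on_comp R_metric X Y _ k V h); auto. intros t Ht. now apply Hbk.
  - intros u Hu. rewrite H2 by now apply Hbk. now apply Hbk.
  - destruct (Hbk p ltac:(lra)) as [_ <-]. symmetry. now apply H1.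
Qed.

Lemma lift_extend (g : R -> Y) (x : X) (sig : R) (b : R -> X) :
  rcont unit_I g -> 0 <= sig <= 1 -> lift_from f g x sig b ->
  exists eta, 0 < eta /\ forall u, 0 <= u <= 1 -> u < sig + eta ->
    exists b', lift_from f g x u b'.
Proof.
  intros Hg Hsig [Hb [Hb0 Hfb]].
  destruct (Hlh (b sig)) as [U [V [Us [_ [HV [h [H1 [H2 [_ Hh]]]]]]]]].
  destruct (HV _ (proj1 (H1 _ Us))) as [rho [Hrho HballV]].
  rewrite Hfb in HballV by lra.
  destruct (rcont_at _ _ Hg sig Hsig rho Hrho) as [e [He Hge]].
  exists e. split; auto. intros u Hu Hue.
  assert (Vg : forall t, sig <= t <= u -> V (g t)).
  { intros t Ht. apply HballV, Hge; [unfold unit_I; lra | apply Rabs_def1; lra]. }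
  (* continue [b] beyond [sig] through the local inverse [h] of [f] at [b sig] *)
  exists (fun t => if Rle_dec t sig then b t else h (g t)). split; [|split].
  - apply rcont_glue; auto.
    + apply (m_continuous_on_comp R_metric X Y _ g V h); auto.
      apply (rcont_sub _ unit_I); auto. intros t Ht. unfold unit_I; lra.
    + rewrite <- Hfb by lra. symmetry. now apply H1.
  - destruct (Rle_dec 0 sig); [auto | lra].
  - intros t Ht. destruct (Rle_dec t sig).
    + apply Hfb. lra.
    + apply H2, Vg. lra.
Qed.

Lemma lifts_glue (g : R -> Y) (x : X) (sig : R) : 0 < sig ->
  (forall u, 0 <= u < sig -> exists b, lift_from f g x u b) ->
  exists a, rcont (fun t => 0 <= t < sig) a /\ a 0 = x /\
    forall t, 0 <= t < sig -> f (a t) = g t.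
Proof.
  intros Hsig Hlifts.
  set (L := fun u => epsilon (inhabits (fun _ : R => x)) (fun b => lift_from f g x u b)).
  assert (HL : forall u, 0 <= u < sig -> lift_from f g x u (L u)).
  { intros u Hu. apply epsilon_spec. now apply Hlifts. }
  set (a := fun t => L ((t + sig) / 2) t).
  assert (Hagree : forall t w, 0 <= t <= w -> w < sig -> L w t = a t).
  { intros t w Htw Hw. unfold a.
    set (w' := (t + sig) / 2).
    destruct (HL w ltac:(lra)) as [C1 [S1 F1]].
    destruct (HL w' ltac:(unfold w'; lra)) as [C2 [S2 F2]].
    pose proof (Rmin_l w w'). pose proof (Rmin_r w w').
    apply (lift_unique 0 (Rmin w w')).
    - apply Rmin_case; unfold w'; lra.
    - apply (rcont_sub _ (fun t => 0 <= t <= w)); auto. intros v Hv. lra.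
    - apply (rcont_sub _ (fun t => 0 <= t <= w')); auto. intros v Hv. lra.
    - intros v Hv. rewrite F1, F2; auto; lra.
    - congruence.
    - split; [lra|]. apply Rmin_case; unfold w'; lra. }
  exists a. split; [|split].
  - apply rcont_intro. intros t Ht eps Heps.
    set (w := (t + sig) / 2).
    destruct (HL w ltac:(unfold w; lra)) as [C1 _].
    destruct (rcont_at _ _ C1 t ltac:(unfold w; lra) eps Heps) as [d [Hd Hcd]].
    exists (Rmin d (w - t)). split; [apply Rmin_case; unfold w; lra|].
    intros t' Ht' Htt. pose proof (Rmin_l d (w - t)). pose proof (Rmin_r d (w - t)).
    apply Rabs_def2 in Htt.
    rewrite <- (Hagree t w), <- (Hagree t' w) by (unfold w in *; lra).
    apply Hcd; [lra|]. apply Rabs_def1; lra.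
  - unfold a. now destruct (HL ((0 + sig) / 2) ltac:(lra)) as [_ [S1 _]].
  - intros t Ht. unfold a. destruct (HL ((t + sig) / 2) ltac:(lra)) as [_ [_ F1]].
    apply F1. lra.
Qed.

Lemma image_of_left_limit (g : R -> Y) (sig : R) (a : R -> X) (xs : X) :
  rcont unit_I g -> 0 < sig <= 1 -> (forall t, 0 <= t < sig -> f (a t) = g t) ->
  converges_at_left a sig xs -> f xs = g sig.
Proof.
  intros Hg Hsig Hfa Hlim. apply eq_of_mdist_lt. intros eps Heps.
  destruct (local_homeomorphism_continuous xs I (eps / 2)) as [d1 [Hd1 Hf1]]; [lra|].
  destruct (rcont_at _ _ Hg sig ltac:(unfold unit_I; lra) (eps / 2)) as [d2 [Hd2 Hg2]]; [lra|].
  destruct (Hlim d1 Hd1) as [eta [Heta Hnear]].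
  destruct (left_point 0 sig (Rmin eta d2)) as [t [Ht [Htd Hts]]];
    [lra | apply Rmin_case; lra |].
  destruct Hts as [Hts| [_ E0]]; [|lra].
  pose proof (Rmin_l eta d2). pose proof (Rmin_r eta d2).
  specialize (Hnear t ltac:(lra) ltac:(lra)). rewrite mdist_sym in Hnear.
  specialize (Hf1 _ I Hnear). rewrite Hfa in Hf1 by lra.
  specialize (Hg2 t ltac:(unfold unit_I; lra) ltac:(apply Rabs_def1; lra)).
  pose proof (mdist_tri _ (f xs) (g t) (g sig)). rewrite (mdist_sym _ (g t) (g sig)) in *. lra.
Qed.

Lemma lift_close (g : R -> Y) (x : X) (sig : R) (a : R -> X) (xs : X) :
  rcont unit_I g -> 0 < sig <= 1 -> rcont (fun t => 0 <= t < sig) a -> a 0 = x ->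
  (forall t, 0 <= t < sig -> f (a t) = g t) -> converges_at_left a sig xs ->
  lift_from f g x sig (fun t => if Rlt_dec t sig then a t else xs).
Proof.
  intros Hg Hsig Ha Ha0 Hfa Hlim. split; [|split].
  - apply rcont_intro. intros t Ht eps Heps. destruct (Rlt_dec t sig) as [Hts|Hts].
    + destruct (rcont_at _ _ Ha t ltac:(lra) eps Heps) as [d [Hd Hc]].
      exists (Rmin d (sig - t)). split; [apply Rmin_case; lra|].
      intros u Hu Htu. pose proof (Rmin_l d (sig - t)). pose proof (Rmin_r d (sig - t)).
      apply Rabs_def2 in Htu. destruct (Rlt_dec u sig); [|lra].
      apply Hc; [lra | apply Rabs_def1; lra].
    + destruct (Hlim eps Heps) as [eta [Heta Hnear]].
      exists eta. split; auto. intros u Hu Htu. apply Rabs_def2 in Htu.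
      destruct (Rlt_dec u sig).
      * rewrite mdist_sym. apply Hnear; lra.
      * rewrite mdist_xx. lra.
  - destruct (Rlt_dec 0 sig); [auto | lra].
  - intros t Ht. destruct (Rlt_dec t sig).
    + apply Hfa. lra.
    + replace t with sig by lra. now apply (image_of_left_limit g sig a).
Qed.

End LocalHomeomorphism.

Section PathLifting.

Variables (X Y : MetricSpace) (f : X -> Y).
Hypothesis Hlh : local_homeomorphism f.
Hypothesis Hcomplete : m_complete X.

Lemma path_lifting_of_deriv_bound (g : R -> Y) (x : X) (c : R) :
  0 < c -> rcont unit_I g -> rectifiable Y g -> f x = g 0 ->
  (forall z t, 0 <= t <= 1 -> f z = g t -> Rbar_lt (Finite c) (lower_deriv f z)) ->
  exists a, lift_from f g x 1 a.
Proof.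
  intros Hc Hg Hrect Hx Hderiv.
  destruct (partial_length_bounded Y g Hrect) as [M HM].
  assert (Hall : forall u, 0 <= u <= 1 -> exists b, lift_from f g x u b).
  2:{ apply Hall; lra. }
  apply (real_induction 0 1); [lra|]. intros sig Hsig Hbelow.
  destruct (Req_dec sig 0) as [->|Hsig0].
  { apply (lift_extend X Y f Hlh g x 0 (fun _ => x) Hg); [lra|].
    split; [|split]; auto.
    - intros t Ht eps Heps. exists 1. split; [lra|]. intros. rewrite mdist_xx. lra.
    - intros t Ht. now replace t with 0 by lra. }
  destruct (lifts_glue X Y f Hlh g x sig ltac:(lra) Hbelow) as [a [Ha [Ha0 Hfa]]].
  (* along the partial lift [f] expands distances by at least [c], so the length of [g]
     controls the oscillation of [a] *)
  assert (Hctrl : forall s t, 0 <= s <= t -> t < sig ->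
    c * mdist (a s) (a t) <= partial_length Y g t - partial_length Y g s).
  { intros s t Hst Hts.
    apply (lift_dist_le_length X Y f a g _ c s t); auto; try lra.
    - apply (rcont_sub _ (fun t => 0 <= t < sig)); auto. intros; lra.
    - intros u Hu. apply Hfa. lra.
    - intros u Hu. apply lower_deriv_gt. apply (Hderiv _ u); [lra|]. apply Hfa. lra.
    - intros s' t' H1 H2. apply partial_length_add; auto; lra. }
  assert (Hcauchy : cauchy_at_left a sig).
  { apply (length_control_cauchy X a (partial_length Y g) c sig M); auto; [lra|].
    intros t Ht. apply HM. lra. }
  destruct (cauchy_at_left_converges X a sig Hcomplete ltac:(lra) Hcauchy) as [xs Hxs].
  apply (lift_extend X Y f Hlh g x sig (fun t => if Rlt_dec t sig then a t else xs) Hg Hsig).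
  apply lift_close; auto; lra.
Qed.

Lemma proper_preimage_of_path_bounded (g : R -> Y) :
  (exists (y0 : Y) (x0 : X), forall M, exists N, forall x,
     mdist x x0 > N -> mdist (f x) y0 > M) ->
  rcont unit_I g -> m_bounded (fun z => exists t, 0 <= t <= 1 /\ f z = g t).
Proof.
  intros [y0 [x0 Hproper]] Hg.
  destruct (path_bounded Y g y0 Hg) as [My HMy].
  destruct (Hproper My) as [N HN].
  assert (Hnear : forall z t, 0 <= t <= 1 -> f z = g t -> mdist z x0 <= N).
  { intros z t Ht Hz. apply Rnot_lt_le. intro Hlt.
    specialize (HN z Hlt). rewrite Hz in HN. specialize (HMy t Ht). lra. }
  exists (N + N). intros z z' [t [Ht Hz]] [t' [Ht' Hz']].
  pose proof (Hnear z t Ht Hz). pose proof (Hnear z' t' Ht' Hz').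
  pose proof (mdist_tri _ z x0 z'). rewrite (mdist_sym _ x0 z') in *. lra.
Qed.

Lemma path_lifting :
  (forall B : X -> Prop, m_bounded B ->
     Rbar_lt (Finite 0) (Rbar_glb (fun v => exists x, B x /\ v = lower_deriv f x))) ->
  (exists (y0 : Y) (x0 : X), forall M, exists N, forall x,
     mdist x x0 > N -> mdist (f x) y0 > M) ->
  forall (g : R -> Y) (x : X), rcont unit_I g -> rectifiable Y g -> f x = g 0 ->
  exists a, lift_from f g x 1 a.
Proof.
  intros Hderiv Hproper g x Hg Hrect Hx.
  set (B := fun z => exists t, 0 <= t <= 1 /\ f z = g t).
  destruct (glb_lower_deriv_pos X Y f B
    (Hderiv B (proper_preimage_of_path_bounded g Hproper Hg))) as [c [Hc HcB]].
  apply (path_lifting_of_deriv_bound g x c); auto.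
  intros z t Ht Hz. apply HcB. now exists t.
Qed.

End PathLifting.

Definition jointly_continuous {Y : MetricSpace} (U : Y -> Prop) (H : Y -> R -> Y) : Prop :=
  forall y t, U y -> unit_I t -> forall eps, 0 < eps -> exists delta, 0 < delta /\
    forall y' t', U y' -> unit_I t' -> mdist y y' < delta -> Rabs (t - t') < delta ->
      mdist (H y t) (H y' t') < eps.

Lemma jointly_continuous_path {Y : MetricSpace} (U : Y -> Prop) (H : Y -> R -> Y) w :
  jointly_continuous U H -> U w -> rcont unit_I (H w).
Proof.
  intros HJ Uw. apply rcont_intro. intros t Ht eps Heps.
  destruct (HJ w t Uw Ht eps Heps) as [d [Hd Hc]]. exists d. split; auto.
  intros u Hu Htu. apply Hc; auto. now rewrite mdist_xx.
Qed.

Section Covering.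

Variables (X Y : MetricSpace) (f : X -> Y).
Hypothesis Hlh : local_homeomorphism f.
Hypothesis Hlift : forall (g : R -> Y) (x : X), rcont unit_I g -> rectifiable Y g ->
  f x = g 0 -> exists a, lift_from f g x 1 a.

Section Contraction.

Variables (U : Y -> Prop) (H : Y -> R -> Y) (y : Y).
Hypothesis HJ : jointly_continuous U H.
Hypothesis HH : forall w, U w -> H w 0 = y /\ H w 1 = w.
Hypothesis HR : forall w, U w -> rectifiable Y (H w).

Lemma lift_contraction_back (z : X) : U (f z) ->
  exists b, lift_from f (fun t => H (f z) (1 - t)) z 1 b /\ f (b 1) = y.
Proof.
  intros Uz. destruct (Hlift (fun t => H (f z) (1 - t)) z) as [b Hb].
  - apply rcont_reverse. now apply (jointly_continuous_path U).
  - apply rectifiable_reverse. auto.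
  - replace (1 - 0) with 1 by ring. symmetry. now apply HH.
  - exists b. split; auto. destruct Hb as [_ [_ Fb]].
    rewrite Fb by lra. replace (1 - 1) with 0 by ring. now apply HH.
Qed.

Lemma contraction_nbhd_in_image (w0 w : Y) (z0 : X) :
  U w0 -> U w -> f z0 = w0 -> exists z, f z = w.
Proof.
  intros U0 Uw <-.
  destruct (lift_contraction_back z0 U0) as [b [_ Hb1]].
  destruct (Hlift (H w) (b 1)) as [a [_ [_ Fa]]].
  - now apply (jointly_continuous_path U).
  - auto.
  - rewrite Hb1. symmetry. now apply HH.
  - exists (a 1). rewrite Fa by lra. now apply HH.
Qed.

Definition sheet_lift (x : X) (w : Y) : R -> X :=
  epsilon (inhabits (fun _ : R => x)) (fun a => lift_from f (H w) x 1 a).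

Definition sheet_map (x : X) (w : Y) : X := sheet_lift x w 1.

Definition sheet (x : X) (z : X) : Prop := U (f z) /\ sheet_map x (f z) = z.

Lemma sheet_lift_spec (x : X) (w : Y) : f x = y -> U w ->
  lift_from f (H w) x 1 (sheet_lift x w).
Proof.
  intros Hx Uw. unfold sheet_lift. apply epsilon_spec, Hlift.
  - now apply (jointly_continuous_path U).
  - auto.
  - rewrite (proj1 (HH w Uw)). auto.
Qed.

Lemma f_sheet_map (x : X) (w : Y) : f x = y -> U w -> f (sheet_map x w) = w.
Proof.
  intros Hx Uw. destruct (sheet_lift_spec x w Hx Uw) as [_ [_ F]].
  unfold sheet_map. rewrite F by lra. now apply HH.
Qed.

Definition sheet_lift_continuous_at (x : X) (w0 : Y) (s : R) : Prop :=
  forall eps, 0 < eps -> exists delta, 0 < delta /\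
    forall w, U w -> mdist w0 w < delta -> mdist (sheet_lift x w s) (sheet_lift x w0 s) < eps.

Lemma sheet_lift_local_inverse (x : X) (w0 : Y) (sig : R) :
  f x = y -> U w0 -> 0 <= sig <= 1 ->
  (forall u, 0 <= u < sig -> sheet_lift_continuous_at x w0 u) ->
  exists (V : Y -> Prop) (h : Y -> X) (eta delta : R),
    0 < eta /\ 0 < delta /\ m_continuous_on V h /\
    forall w u, U w -> mdist w0 w < delta -> sig <= u <= 1 -> u < sig + eta ->
      V (H w u) /\ sheet_lift x w u = h (H w u).
Proof.
  intros Hx U0 Hsig Hbelow. set (al := sheet_lift x).
  destruct (sheet_lift_spec x w0 Hx U0) as [C0 [S0 F0]].
  set (z := al w0 sig).
  destruct (Hlh z) as [Uz [Vz [Uzz [HUz [HVz [h [H1 [H2 [_ Hh]]]]]]]]].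
  destruct (HUz _ Uzz) as [r [Hr Hball]].
  destruct (HVz _ (proj1 (H1 _ Uzz))) as [rho [Hrho HballV]].
  unfold z in HballV. rewrite F0 in HballV by lra.
  destruct (HJ w0 sig U0 Hsig rho Hrho) as [e1 [He1 E1]].
  destruct (rcont_at _ _ C0 sig Hsig (r / 2)) as [e2 [He2 E2]]; [lra|].
  set (eta := Rmin e1 e2).
  assert (Heta : 0 < eta) by (apply Rmin_case; lra).
  assert (Heta1 : eta <= e1) by apply Rmin_l.
  assert (Heta2 : eta <= e2) by apply Rmin_r.
  destruct (left_point 0 sig eta) as [u0 [Hu0 [Hu0e Hu0s]]]; [lra | lra |].
  assert (P0 : exists d0, 0 < d0 /\
    forall w, U w -> mdist w0 w < d0 -> mdist (al w u0) (al w0 u0) < r / 2).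
  { destruct Hu0s as [Hlt| [-> _]]; [apply Hbelow; lra|].
    exists 1. split; [lra|]. intros w Uw _.
    destruct (sheet_lift_spec x w Hx Uw) as [_ [Sw _]].
    unfold al. rewrite Sw, S0, mdist_xx. lra. }
  destruct P0 as [d0 [Hd0 D0]].
  set (q := Rmin (sig + eta / 2) 1).
  assert (Hq1 : q <= sig + eta / 2) by apply Rmin_l.
  assert (Hq2 : q <= 1) by apply Rmin_r.
  assert (Hq3 : sig <= q) by (unfold q; apply Rmin_case; lra).
  assert (Vin : forall w u, U w -> mdist w0 w < e1 -> 0 <= u <= 1 -> Rabs (sig - u) < e1 ->
    Vz (H w u)) by (intros; apply HballV, E1; auto).
  exists Vz, h, (eta / 2), (Rmin d0 e1).
  split; [lra|]. split; [apply Rmin_case; lra|]. split; auto.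
  intros w u Uw Hw Hu Hue. pose proof (Rmin_l d0 e1). pose proof (Rmin_r d0 e1).
  split; [apply Vin; [exact Uw | lra | lra | apply Rabs_def1; lra]|].
  destruct (sheet_lift_spec x w Hx Uw) as [Cw [_ Fw]].
  (* the lift of [H w] starts in [Uz] at [u0], so it follows [h] over [[u0, q]] *)
  apply (lift_eq_local_inverse X Y f Hlh Uz Vz h u0 q); auto.
  - intros v Vv. now apply H2.
  - lra.
  - apply (rcont_sub _ (fun t => 0 <= t <= 1)); auto. intros; lra.
  - apply (rcont_sub _ unit_I); [|now apply (jointly_continuous_path U)].
    intros t Ht. unfold unit_I; lra.
  - intros t Ht. split.
    + apply Vin; [exact Uw | lra | lra | apply Rabs_def1; lra].
    + apply Fw. lra.
  - apply Hball.
    assert (mdist z (al w0 u0) < r / 2) by (apply E2; [lra | apply Rabs_def1; lra]).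
    pose proof (D0 w Uw ltac:(lra)). pose proof (mdist_tri _ z (al w0 u0) (al w u0)).
    rewrite (mdist_sym _ (al w0 u0) (al w u0)) in *. lra.
  - unfold q. split; [lra | apply Rmin_case; lra].
Qed.

Lemma sheet_lift_continuous (x : X) (w0 : Y) : f x = y -> U w0 ->
  forall s, 0 <= s <= 1 -> sheet_lift_continuous_at x w0 s.
Proof.
  intros Hx U0. apply (real_induction 0 1); [lra|]. intros sig Hsig Hbelow.
  destruct (sheet_lift_local_inverse x w0 sig Hx U0 Hsig Hbelow)
    as [V [h [eta [d0 [Heta [Hd0 [Hh Hloc]]]]]]].
  exists eta. split; auto. intros u Hu Hue.
  destruct (Rlt_dec u sig) as [Hus|Hus]; [apply Hbelow; lra|].
  intros eps Heps.
  destruct (Hloc w0 u U0 ltac:(rewrite mdist_xx; lra) ltac:(lra) Hue) as [Vu ->].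
  destruct (Hh _ Vu eps Heps) as [k [Hk Hhk]].
  destruct (HJ w0 u U0 Hu k Hk) as [d1 [Hd1 D1]].
  exists (Rmin d0 d1). split; [apply Rmin_case; lra|].
  intros w Uw Hw. pose proof (Rmin_l d0 d1). pose proof (Rmin_r d0 d1).
  destruct (Hloc w u Uw ltac:(lra) ltac:(lra) Hue) as [Vwu ->].
  rewrite mdist_sym. apply Hhk; auto.
  apply D1; auto; [lra|]. rewrite Rminus_diag, Rabs_R0. auto.
Qed.

Lemma sheet_map_continuous (x : X) : f x = y -> m_continuous_on U (sheet_map x).
Proof.
  intros Hx w0 U0 eps Heps.
  destruct (sheet_lift_continuous x w0 Hx U0 1 ltac:(lra) eps Heps) as [d [Hd Hw]].
  exists d. split; auto. intros w Uw Hw0. rewrite mdist_sym. now apply Hw.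
Qed.

Lemma sheet_open (x : X) : m_open U -> f x = y -> m_open (sheet x).
Proof.
  intros HUo Hx z [Uz Hz].
  destruct (Hlh z) as [Uz' [Vz [Uzz [HUz [_ [h [H1 _]]]]]]].
  destruct (HUz _ Uzz) as [r [Hr Hball]].
  destruct (HUo _ Uz) as [rho [Hrho HballU]].
  pose proof (local_homeomorphism_continuous X Y f Hlh) as Hf.
  destruct (Hf z I rho Hrho) as [d1 [Hd1 D1]].
  destruct (sheet_map_continuous x Hx (f z) Uz r Hr) as [k [Hk K]].
  destruct (Hf z I k Hk) as [d2 [Hd2 D2]].
  exists (Rmin (Rmin d1 d2) r). split; [repeat apply Rmin_case; lra|].
  intros z' Hzz'.
  pose proof (Rmin_l (Rmin d1 d2) r). pose proof (Rmin_r (Rmin d1 d2) r).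
  pose proof (Rmin_l d1 d2). pose proof (Rmin_r d1 d2).
  assert (Uz2 : U (f z')) by (apply HballU, D1; auto; lra).
  split; auto.
  (* both [z'] and [sheet_map x (f z')] lie over [f z'] in the domain [Uz'] of injectivity *)
  assert (Ua : Uz' (sheet_map x (f z'))).
  { apply Hball. rewrite <- Hz at 1. apply K; auto. apply D2; auto; lra. }
  assert (Ub : Uz' z') by (apply Hball; lra).
  pose proof (proj2 (H1 _ Ua)) as E1. pose proof (proj2 (H1 _ Ub)) as E2.
  rewrite f_sheet_map in E1 by auto. congruence.
Qed.

Lemma sheet_unique (x x' z : X) : f x = y -> f x' = y -> sheet x z -> sheet x' z -> x = x'.
Proof.
  intros Hx Hx' [Uz Hz] [_ Hz'].
  pose proof (lift_reverse f _ _ _ (sheet_lift_spec x (f z) Hx Uz)) as [C1 [S1 F1]].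
  pose proof (lift_reverse f _ _ _ (sheet_lift_spec x' (f z) Hx' Uz)) as [C2 [S2 F2]].
  destruct (sheet_lift_spec x (f z) Hx Uz) as [_ [S3 _]].
  destruct (sheet_lift_spec x' (f z) Hx' Uz) as [_ [S4 _]].
  rewrite <- S3, <- S4. replace 0 with (1 - 1) by ring.
  apply (lift_unique X Y f Hlh 0 1 (fun t => sheet_lift x (f z) (1 - t))
    (fun t => sheet_lift x' (f z) (1 - t))); auto; try lra.
  - intros u Hu. rewrite F1, F2; auto.
  - rewrite S1, S2. exact (eq_trans Hz (eq_sym Hz')).
Qed.

Lemma sheet_cover (z : X) : U (f z) -> exists x, f x = y /\ sheet x z.
Proof.
  intros Uz.
  destruct (lift_contraction_back z Uz) as [b [[Cb [Sb Fb]] Hb1]].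
  exists (b 1). split; auto. split; auto.
  destruct (sheet_lift_spec (b 1) (f z) Hb1 Uz) as [Ca [Sa Fa]].
  assert (E : forall u, 0 <= u <= 1 -> sheet_lift (b 1) (f z) u = b (1 - u)).
  { apply (lift_unique X Y f Hlh 0 1); auto; try lra.
    - exact (rcont_reverse b Cb).
    - intros u Hu. rewrite Fa, Fb by lra. f_equal. ring.
    - rewrite Sa. f_equal. ring. }
  unfold sheet_map. rewrite E by lra. replace (1 - 1) with 0 by ring. exact Sb.
Qed.

Lemma sheet_homeo (x : X) : f x = y -> homeo_onto f (sheet x) U.
Proof.
  intros Hx. exists (sheet_map x). split; [|split; [|split]].
  - intros z [Uz Hz]. auto.
  - intros w Uw. pose proof (f_sheet_map x w Hx Uw) as Hw.
    split; [split|]; [now rewrite Hw | now rewrite Hw | exact Hw].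
  - apply (m_continuous_on_sub X Y _ (fun _ => True)); auto.
    exact (local_homeomorphism_continuous X Y f Hlh).
  - now apply sheet_map_continuous.
Qed.

End Contraction.

Lemma evenly_covered : locally_R_contractible Y ->
  forall y, exists (V : Y -> Prop), V y /\ m_open V /\
    exists (I : Type) (W : I -> X -> Prop),
      (forall i, m_open (W i)) /\
      (forall i j x, W i x -> W j x -> i = j) /\
      (forall x, V (f x) <-> exists i, W i x) /\
      (forall i, homeo_onto f (W i) V).
Proof.
  intros Hrc y.
  destruct (Hrc y) as [U [H [Uy [HUo [_ [HJ [_ [HH HR]]]]]]]].
  exists U. split; auto. split; auto.
  exists {x : X | f x = y}, (fun i => sheet U H (proj1_sig i)).
  split; [|split; [|split]].
  - intros [x Hx]. now apply (sheet_open U H y).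
  - intros [x Hx] [x' Hx'] z Wz Wz'.
    pose proof (sheet_unique U H y HJ HH HR x x' z Hx Hx' Wz Wz'). subst x'.
    f_equal. apply proof_irrelevance.
  - intros z. split.
    + intros Uz. destruct (sheet_cover U H y HJ HH HR z Uz) as [x [Hx Wz]].
      now exists (exist _ x Hx).
    + intros [i [Uz _]]. auto.
  - intros [x Hx]. now apply (sheet_homeo U H y).
Qed.

Lemma surjective_of_contractible : path_connected Y -> locally_R_contractible Y ->
  forall x0 : X, forall y, exists x, f x = y.
Proof.
  intros Hpc Hrc x0 y.
  destruct (Hpc (f x0) y) as [p [Hp [Hp0 Hp1]]].
  assert (Hall : forall u, 0 <= u <= 1 -> exists z, f z = p u).
  2:{ rewrite <- Hp1. apply Hall. lra. }
  apply (real_induction 0 1); [lra|]. intros s Hs Hbelow.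
  destruct (Hrc (p s)) as [U [H [Us [HUo [_ [HJ [_ [HH HR]]]]]]]].
  destruct (HUo _ Us) as [r [Hr Hball]].
  destruct (rcont_at _ _ Hp s Hs r Hr) as [eta [Heta Hnear]].
  destruct (left_point 0 s eta) as [u0 [Hu0 [Hu0e Hu0s]]]; [lra | lra |].
  assert (Hz0 : exists z, f z = p u0).
  { destruct Hu0s as [Hlt| [-> _]]; [apply Hbelow; lra|]. now exists x0. }
  destruct Hz0 as [z0 Hz0].
  exists eta. split; auto. intros u Hu Hue.
  destruct (Rlt_dec u s) as [Hus|Hus]; [apply Hbelow; lra|].
  apply (contraction_nbhd_in_image U H (p s) HJ HH HR (p u0) (p u) z0); auto.
  - apply Hball, Hnear; [unfold unit_I; lra | apply Rabs_def1; lra].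
  - apply Hball, Hnear; [unfold unit_I; lra | apply Rabs_def1; lra].
Qed.

End Covering.

Theorem mainTheorem12 (X Y : MetricSpace) (f : X -> Y) :
  no_isolated_points X ->
  m_complete X ->
  path_connected Y ->
  locally_R_contractible Y ->
  local_homeomorphism f ->
  (forall B : X -> Prop, m_bounded B ->
     Rbar_lt (Finite 0) (Rbar_glb (fun v => exists x, B x /\ v = lower_deriv f x))) ->
  (exists (y0 : Y) (x0 : X), forall M, exists N, forall x,
     mdist x x0 > N -> mdist (f x) y0 > M) ->
  covering_projection f.
Proof.
  intros _ Hcomplete Hpc Hrc Hlh Hderiv Hproper.
  pose proof (path_lifting X Y f Hlh Hcomplete Hderiv Hproper) as Hlift.
  destruct Hproper as [_ [x0 _]].
  split; [exact (local_homeomorphism_continuous X Y f Hlh)|].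
  split; [exact (surjective_of_contractible X Y f Hlift Hpc Hrc x0)|].
  exact (evenly_covered X Y f Hlh Hlift Hrc).
Qed.
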